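(* Let $m\geq1$ and for $n\geq 0$ let $h_n$ be the number of $(2m+1)$-historic trees on $n+m$ vertices. Then the exponential generating function $H(x)=\sum_{n\geq0}h_n\frac{x^n}{n!}$ satisfies, as a formal power series, \[ H^{(m+1)}(x)=H(x)^2,\qquad H(0)=H'(0)=\cdots=H^{(m)}(0)=1. \]
   Context: A $(2m+1)$-historic tree on $N$ vertices is a rooted plane tree whose vertices are labelled bijectively by $\{1,\dots,N\}$ with labels increasing along every path from the root to a leaf, such that (root at height $0$) the vertices at heights $2m,3m+1,4m+2,\dots$ (i.e. $2m+j(m+1)$, $j\geq0$), called branchings, have two ordered child slots (left and right), each of which may or may not be occupied, while all other vertices have a single child slot (at most one child). Two such trees are equal if they agree as labelled plane trees, with a single child of a branching distinguished as left or right. *)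

From mathcomp Require Import all_boot all_order all_algebra.
Set Implicit Arguments. Unset Strict Implicit. Unset Printing Implicit Defensive.
Import Order.TTheory GRing.Theory Num.Theory.

(* A labelled tree on N vertices is encoded on the vertex set 'I_N, where
   vertex i carries label i+1.  [f i = None] means i is the root;
   [f i = Some (j, b)] means i is a child of j, occupying slot b of j
   (b = false: the left slot, or the unique slot of a non-branching vertex;
    b = true: the right slot of a branching vertex). *)

Definition tree_code (N : nat) := {ffun 'I_N -> option ('I_N * bool)}.

Fixpoint hgt (N : nat) (f : tree_code N) (fuel : nat) (i : 'I_N) : nat :=
  match fuel with
  | 0 => 0
  | k.+1 => match f i with None => 0 | Some (j, _) => (@hgt N f k j).+1 end
  end.

Definition height (N : nat) (f : tree_code N) (i : 'I_N) : nat := @hgt N f N i.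

Definition branching_height (m h : nat) : bool :=
  (2 * m <= h) && ((h - 2 * m) %% m.+1 == 0).

Definition historic (m N : nat) (f : tree_code N) : bool :=
  [forall i : 'I_N, (f i == None) == (val i == 0)] &&
  [forall i : 'I_N, forall j : 'I_N, forall b : bool,
     (f i == Some (j, b)) ==>
       ((val j < val i) && (b ==> branching_height m (@height N f j)))] &&
  [forall i : 'I_N, forall i' : 'I_N,
     ((f i != None) && (f i == f i')) ==> (i == i')].

Definition historic_count (m N : nat) : nat := #|[pred f : tree_code N | @historic m N f]|.

Local Open Scope ring_scope.

Definition fps := nat -> rat.

Definition fps_deriv (F : fps) : fps := fun n => F n.+1 *+ n.+1.

Definition fps_mul (F G : fps) : fps :=
  fun n => \sum_(k < n.+1) F k * G (n - k)%N.

Definition egf (a : nat -> nat) : fps := fun n => (a n)%:R / (n`!)%:R.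

From mathcomp Require Import all_boot all_order all_algebra zify.
From mathcomp.algebra_tactics Require Import ring.
Set Implicit Arguments. Unset Strict Implicit. Unset Printing Implicit Defensive.
Import Order.TTheory GRing.Theory Num.Theory.

(* Make the set B of branching heights a parameter and let c_B(N) count the
   trees on N vertices; put B' = {h | h+1 \in B}. If the root is not a
   branching, deleting it is a bijection onto the trees for B', so
   c_B(N+1) = c_B'(N). If it is, deleting it splits the tree into its left and
   right subtrees on complementary sets of labels, so
   c_B(N+1) = sum_k C(N,k) c_B'(k) c_B'(N-k).
   With B_d = {d + j(m+1)} we have B_d' = B_(d-1) for d > 0 and B_0' = B_m,
   hence h_n = c_(B_2m)(n+m) = c_(B_m)(n) and
   h_(n+m+1) = c_(B_0)(n+1) = sum_k C(n,k) h_k h_(n-k), which is H^(m+1) = H^2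
   read on coefficients; moreover h_k = c_(B_(m-k))(0) = 1 for k <= m. *)

Definition parent_lt N (f : tree_code N) :=
  forall i j b, f i = Some (j, b) -> (j < i)%N.

Section ParentFold.
Variables (N : nat) (A : Type) (a0 : A) (st : 'I_N -> bool -> A -> A).
Implicit Types (f : tree_code N) (i : 'I_N).

Fixpoint fold_parents f k i : A :=
  match k with 0 => a0 | k.+1 =>
    match f i with None => a0 | Some (j, b) => st j b (fold_parents f k j) end end.

Definition parent_fold f i := fold_parents f N i.

Definition parent_recursive f (G : 'I_N -> A) :=
  forall i, G i = match f i with None => a0 | Some (j, b) => st j b (G j) end.

Lemma fold_parents_fuel f k1 k2 i : parent_lt f ->
  (i < k1)%N -> (i < k2)%N -> fold_parents f k1 i = fold_parents f k2 i.
Proof.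
move=> ps; elim: k1 k2 i => [|k1 IH] [|k2] i //= h1 h2.
case E: (f i) => [[j b]|] //.
by rewrite (IH k2) //; have := ps _ _ _ E; lia.
Qed.

Lemma parent_foldE f : parent_lt f -> parent_recursive f (parent_fold f).
Proof.
move=> ps i; rewrite /parent_fold (@fold_parents_fuel f N i.+1 i) //=.
case E: (f i) => [[j b]|] //; congr st.
by apply: fold_parents_fuel => //; have := ps _ _ _ E.
Qed.

Lemma parent_recursive_uniq f G1 G2 : parent_lt f ->
  parent_recursive f G1 -> parent_recursive f G2 -> G1 =1 G2.
Proof.
move=> ps h1 h2 i.
suff eqG n (k : 'I_N) : (k < n)%N -> G1 k = G2 k by exact: (eqG i.+1).
elim: n k => [//|n IH] k lt; rewrite h1 h2; case E: (f k) => [[j b]|] //.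
by rewrite IH //; have := ps _ _ _ E; lia.
Qed.

End ParentFold.

Definition height_spec N (f : tree_code N) (H : 'I_N -> nat) :=
  parent_recursive 0 (fun _ _ h => h.+1) f H.

Lemma heightE N (f : tree_code N) : parent_lt f -> height_spec f (height f).
Proof.
move=> ps.
have hgtE k i : hgt f k i = fold_parents 0 (fun _ _ h => h.+1) f k i.
  by elim: k i => [|k IH] i //=; case: (f i) => [[j b]|] //; rewrite IH.
move=> i; rewrite /height hgtE -/(parent_fold _ _ f i) (parent_foldE _ _ ps i).
by case: (f i) => [[j b]|] //; rewrite hgtE.
Qed.

Lemma height_spec_uniq N (f : tree_code N) H :
  parent_lt f -> height_spec f H -> H =1 height f.
Proof. by move=> ps hH; apply: parent_recursive_uniq ps hH (heightE ps). Qed.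

Definition historic_with (B : nat -> bool) N (f : tree_code N) : bool :=
  [forall i : 'I_N, (f i == None) == (val i == 0)] &&
  [forall i : 'I_N, forall j : 'I_N, forall b : bool,
     (f i == Some (j, b)) ==>
       ((val j < val i) && (b ==> B (@height N f j)))] &&
  [forall i : 'I_N, forall i' : 'I_N,
     ((f i != None) && (f i == f i')) ==> (i == i')].

Definition count_historic B N := #|[pred f : tree_code N | historic_with B f]|.

Lemma historic_withP (B : nat -> bool) N (f : tree_code N) :
  reflect [/\ parent_lt f, (forall i, f i = None -> val i = 0),
             (forall i j, f i = Some (j, true) -> B (height f j)) &
             (forall i i', f i != None -> f i = f i' -> i = i')]
          (historic_with B f).
Proof.
apply: (iffP idP).
- case/andP=> /andP[/forallP r /forallP p] /forallP u; split.
  + move=> i j b E; move: (p i) => /forallP/(_ j)/forallP/(_ b).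
    by rewrite E eqxx /= => /andP[].
  + by move=> i E; move: (r i); rewrite E eqxx eq_sym eqb_id => /eqP.
  + move=> i j E; move: (p i) => /forallP/(_ j)/forallP/(_ true).
    by rewrite E eqxx /= => /andP[].
  + by move=> i i' h E; move: (u i) => /forallP/(_ i'); rewrite h E eqxx /= => /eqP.
- case=> ps r p u; apply/andP; split; [apply/andP; split|].
  + apply/forallP=> i; case E: (f i) => [[j b]|]; last by rewrite (r _ E) eqxx.
    by have := ps _ _ _ E; rewrite /= eq_sym eqbF_neg => lt; apply/eqP; lia.
  + apply/forallP=> i; apply/forallP=> j; apply/forallP=> b; apply/implyP=> /eqP E.
    by rewrite (ps _ _ _ E) /=; case: b E => //= E; exact: p E.
  + apply/forallP=> i; apply/forallP=> i'; apply/implyP=> /andP[h /eqP E].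
    by rewrite (u _ _ h E).
Qed.

Lemma eq_count_historic B B' N : B =1 B' -> count_historic B N = count_historic B' N.
Proof.
move=> eB; apply: eq_card => f; rewrite !inE.
apply/historic_withP/historic_withP => -[ps r p u]; split=> // i j E.
  by rewrite -eB; exact: p E.
by rewrite eB; exact: p E.
Qed.

Lemma count_historic0 B : count_historic B 0 = 1.
Proof.
rewrite /count_historic (eq_card (B := predT)).
  by rewrite cardT -cardE card_ffun card_ord expn0.
by move=> f; rewrite !inE; apply/andP; split; [apply/andP; split|];
  apply/forallP => -[].
Qed.

(** * A root that is not a branching *)

Section AddRoot.
Variable N : nat.

Definition add_root (g : tree_code N) : tree_code N.+1 :=
  [ffun x => if unlift ord0 x is Some i then
     Some (if g i is Some (j, b) then (lift ord0 j, b) else (ord0, false)) else None].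

Definition drop_root (f : tree_code N.+1) : tree_code N :=
  [ffun i => if f (lift ord0 i) is Some (j, b) then
     (if unlift ord0 j is Some j' then Some (j', b) else None) else None].

Lemma add_root0 g : add_root g ord0 = None.
Proof. by rewrite ffunE unlift_none. Qed.

Lemma add_root_lift g i : add_root g (lift ord0 i) =
  Some (if g i is Some (j, b) then (lift ord0 j, b) else (ord0, false)).
Proof. by rewrite ffunE liftK. Qed.

Lemma add_rootK : cancel add_root drop_root.
Proof.
move=> g; apply/ffunP=> i; rewrite ffunE add_root_lift.
by case: (g i) => [[j b]|] /=; rewrite ?liftK ?unlift_none.
Qed.

Lemma parent_lt_add_root g : parent_lt (add_root g) <-> parent_lt g.
Proof.
split=> ps.
- move=> i j b E; have := ps (lift ord0 i) (lift ord0 j) b.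
  by rewrite add_root_lift E !lift0 => /(_ erefl).
- move=> x y b; case: (unliftP ord0 x) => [i ->|->]; rewrite ?add_root0 ?add_root_lift //.
  by case E: (g i) => [[j b']|] [<- _]; rewrite !lift0 //; exact: ps E.
Qed.

Lemma height_add_root g i : parent_lt g ->
  height (add_root g) (lift ord0 i) = (height g i).+1.
Proof.
move=> ps.
pose H x := if unlift ord0 x is Some i then (height g i).+1 else 0.
suff /height_spec_uniq e : height_spec (add_root g) H.
  by rewrite -e ?parent_lt_add_root // /H liftK.
move=> x; rewrite /H; case: (unliftP ord0 x) => [k ->|->];
  rewrite ?add_root0 ?add_root_lift ?unlift_none ?liftK //.
by rewrite (heightE ps k); case: (g k) => [[j b]|] //=; rewrite ?liftK ?unlift_none.
Qed.

Lemma historic_add_root B g :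
  historic_with B (add_root g) = historic_with (B \o succn) g.
Proof.
apply/historic_withP/historic_withP.
- case=> /parent_lt_add_root ps r p u; split=> //.
  + move=> i E.
    pose z := Ordinal (leq_ltn_trans (leq0n i) (ltn_ord i)).
    have gz : g z = None by case Ez: (g z) => [[j b]|] //; have := ps _ _ _ Ez.
    have := u (lift ord0 i) (lift ord0 z); rewrite !add_root_lift E gz.
    by move=> /(_ isT erefl) /lift_inj ->.
  + move=> i j E; have := p (lift ord0 i) (lift ord0 j).
    by rewrite add_root_lift E height_add_root // => /(_ erefl).
  + move=> i i' h E; have := u (lift ord0 i) (lift ord0 i').
    by rewrite !add_root_lift E => /(_ isT erefl) /lift_inj.
- case=> ps r p u; split; first exact/parent_lt_add_root.
  + by move=> x; case: (unliftP ord0 x) => [i ->|->]; rewrite ?add_root0 ?add_root_lift.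
  + move=> x y; case: (unliftP ord0 x) => [i ->|->]; rewrite ?add_root0 ?add_root_lift //.
    case E: (g i) => [[j b]|] //= [<- eb]; subst b.
    by rewrite height_add_root //; exact: p E.
  + move=> x x'; case: (unliftP ord0 x) => [i ->|->]; rewrite ?add_root0 ?add_root_lift //.
    case: (unliftP ord0 x') => [i' ->|->]; rewrite ?add_root0 ?add_root_lift // => _.
    case E: (g i) => [[j b]|]; case E': (g i') => [[j' b']|] //.
    * move=> [/addnI/ord_inj ej eb]; subst j' b'.
      by congr lift; apply: u; rewrite ?E ?E'.
    * by move=> _; congr lift; apply: ord_inj; rewrite (r _ E) (r _ E').
Qed.

Lemma drop_rootK B f : B 0 = false -> historic_with B f -> add_root (drop_root f) = f.
Proof.
move=> B0 /historic_withP[ps r p _].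
have f0 : f ord0 = None by case Ez: (f ord0) => [[j b]|] //; have := ps _ _ _ Ez.
apply/ffunP=> x; case: (unliftP ord0 x) => [i ->|->]; last by rewrite add_root0 f0.
rewrite add_root_lift ffunE; case E: (f (lift ord0 i)) => [[j b]|]; last first.
  by have := r _ E.
case: (unliftP ord0 j) E => [j' ->|->] E //.
by case: b E => // /p; rewrite (heightE ps ord0) f0 B0.
Qed.

Lemma count_historic_add_root B :
  B 0 = false -> count_historic B N.+1 = count_historic (B \o succn) N.
Proof.
move=> B0; rewrite /count_historic -(card_imset _ (can_inj add_rootK)).
apply: eq_card => f; rewrite inE; apply/idP/imsetP.
- move=> hf; exists (drop_root f); last by rewrite (drop_rootK B0 hf).
  by rewrite inE -historic_add_root (drop_rootK B0 hf).
- by case=> g; rewrite inE -historic_add_root => hg ->.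
Qed.

End AddRoot.

(** * A root that is a branching *)

Section OrderedSubset.
Variable N : nat.
Implicit Types (T : {set 'I_N}) (x : 'I_N).

(* [elt T] enumerates [T] increasingly, so relabelling a subtree along it
   keeps labels increasing. *)
Definition elt T : 'I_#|T| -> 'I_N := @Order.enum_val _ 'I_N (pred_of_set T).
Arguments elt : clear implicits.

Lemma elt_le T i j : (elt T i <= elt T j)%N = (i <= j)%N.
Proof. exact: (@Order.le_enum_val _ 'I_N (@le_total _ 'I_N) _ i j). Qed.

Lemma elt_lt T i j : (elt T i < elt T j)%N = (i < j)%N.
Proof. by rewrite !ltnNge elt_le. Qed.

Lemma elt_inj T : injective (elt T).
Proof. by move=> i j e; apply: ord_inj; apply/eqP; rewrite eqn_leq -!elt_le e leqnn. Qed.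

Lemma elt_in T r : elt T r \in T.
Proof. exact: Order.enum_valP. Qed.

Lemma elt_notinC T r : (elt (~: T) r \in T) = false.
Proof. by apply/negbTE; have := elt_in r; rewrite inE. Qed.

Lemma elt_surj T x : x \in T -> exists r, elt T r = x.
Proof. by move=> h; exists (Order.enum_rank_in h x); exact: Order.enum_rankK_in. Qed.

Definition elt_index T x : option 'I_#|T| := [pick r | elt T r == x].

Lemma elt_indexK T r : elt_index T (elt T r) = Some r.
Proof. by rewrite /elt_index; case: pickP => [r' /eqP /elt_inj -> // | /(_ r)]; rewrite eqxx. Qed.

Lemma elt_index_notin T x : x \notin T -> elt_index T x = None.
Proof. by rewrite /elt_index; case: pickP => // r /eqP <-; rewrite elt_in. Qed.

Variant split_vertex_spec T : 'I_N.+1 -> Prop :=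
 | SplitRoot : split_vertex_spec T ord0
 | SplitIn r : split_vertex_spec T (lift ord0 (elt T r))
 | SplitOut r : split_vertex_spec T (lift ord0 (elt (~: T) r)).

Lemma split_vertexP T (x : 'I_N.+1) : split_vertex_spec T x.
Proof.
case: (unliftP ord0 x) => [i ->|->]; last exact: SplitRoot.
case: (boolP (i \in T)) => h; first by have [r <-] := elt_surj h; exact: SplitIn.
by have [|r <-] := @elt_surj (~: T) i; [rewrite inE | exact: SplitOut].
Qed.

End OrderedSubset.
Arguments elt {N} T _.

Definition graft_parent N k (s : 'I_k -> 'I_N) (side : bool)
    (e : option ('I_k * bool)) : option ('I_N.+1 * bool) :=
  Some (if e is Some (j, b) then (lift ord0 (s j), b) else (ord0, side)).

Definition prune_parent N k (index : 'I_N -> option 'I_k)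
    (e : option ('I_N.+1 * bool)) : option ('I_k * bool) :=
  if e is Some (j, b) then
    (if unlift ord0 j is Some j' then
       (if index j' is Some r then Some (r, b) else None) else None)
  else None.

Lemma graft_parentK N (T : {set 'I_N}) side e :
  prune_parent (elt_index T) (graft_parent (elt T) side e) = e.
Proof. by case: e => [[j b]|] /=; rewrite ?liftK ?elt_indexK ?unlift_none. Qed.

Lemma graft_parent_eq N k1 k2 (s1 : 'I_k1 -> 'I_N) (s2 : 'I_k2 -> 'I_N) c1 c2 e1 e2 :
  graft_parent s1 c1 e1 = graft_parent s2 c2 e2 ->
  match e1, e2 with
  | None, None => c1 = c2
  | Some (j1, b1), Some (j2, b2) => s1 j1 = s2 j2 /\ b1 = b2
  | _, _ => False end.
Proof.
case: e1 => [[j1 b1]|]; case: e2 => [[j2 b2]|] //= [] //.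
by move=> /addnI ej ->; split=> //; exact: ord_inj.
Qed.

Section JoinAtRoot.
Variables (N : nat) (S : {set 'I_N}).

Definition join_at_root (gL : tree_code #|S|) (gR : tree_code #|~: S|) :
    tree_code N.+1 :=
  [ffun x => if unlift ord0 x is Some i then
     (if elt_index S i is Some r then graft_parent (elt S) false (gL r)
      else if elt_index (~: S) i is Some r then graft_parent (elt (~: S)) true (gR r)
      else None) else None].

Definition subtree (T : {set 'I_N}) (f : tree_code N.+1) : tree_code #|T| :=
  [ffun r => prune_parent (elt_index T) (f (lift ord0 (elt T r)))].

Variables (gL : tree_code #|S|) (gR : tree_code #|~: S|).
Local Notation f := (join_at_root gL gR).

Lemma join_at_root0 : f ord0 = None.
Proof. by rewrite ffunE unlift_none. Qed.

Lemma join_at_rootL r : f (lift ord0 (elt S r)) = graft_parent (elt S) false (gL r).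
Proof. by rewrite ffunE liftK elt_indexK. Qed.

Lemma join_at_rootR r : f (lift ord0 (elt (~: S) r)) = graft_parent (elt (~: S)) true (gR r).
Proof. by rewrite ffunE liftK elt_index_notin ?elt_indexK // elt_notinC. Qed.

Lemma subtree_join_at_rootL : subtree S f = gL.
Proof. by apply/ffunP=> r; rewrite ffunE join_at_rootL graft_parentK. Qed.

Lemma subtree_join_at_rootR : subtree (~: S) f = gR.
Proof. by apply/ffunP=> r; rewrite ffunE join_at_rootR graft_parentK. Qed.

Lemma parent_lt_join_at_root : parent_lt gL -> parent_lt gR -> parent_lt f.
Proof.
have lift_lt (a b : 'I_N) : (lift ord0 a < bump 0 b)%N = (a < b)%N by [].
move=> pL pR x y b; case: (split_vertexP S x) => [|r|r];
  rewrite ?join_at_root0 ?join_at_rootL ?join_at_rootR //=.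
- by case E: (gL r) => [[j c]|] [<- _]; rewrite ?lift_lt // elt_lt; exact: pL E.
- by case E: (gR r) => [[j c]|] [<- _]; rewrite ?lift_lt // elt_lt; exact: pR E.
Qed.

Lemma height_join_at_root : parent_lt gL -> parent_lt gR ->
  [/\ forall r, height f (lift ord0 (elt S r)) = (height gL r).+1,
      forall r, height f (lift ord0 (elt (~: S) r)) = (height gR r).+1
    & height f ord0 = 0].
Proof.
move=> pL pR.
pose H x := if unlift ord0 x is Some i then
   (if elt_index S i is Some r then (height gL r).+1
    else if elt_index (~: S) i is Some r then (height gR r).+1 else 0) else 0.
have H0 : H ord0 = 0 by rewrite /H unlift_none.
have HL r : H (lift ord0 (elt S r)) = (height gL r).+1 by rewrite /H liftK elt_indexK.
have HR r : H (lift ord0 (elt (~: S) r)) = (height gR r).+1.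
  by rewrite /H liftK elt_index_notin ?elt_indexK // elt_notinC.
suff /height_spec_uniq e : height_spec f H.
  by split=> [r|r|]; rewrite -e ?H0 ?HL ?HR //; exact: parent_lt_join_at_root.
move=> x; case: (split_vertexP S x) => [|r|r];
  rewrite ?H0 ?HL ?HR ?join_at_root0 ?join_at_rootL ?join_at_rootR //=.
- by rewrite (heightE pL r); case: (gL r) => [[j c]|] /=; rewrite ?HL ?H0.
- by rewrite (heightE pR r); case: (gR r) => [[j c]|] /=; rewrite ?HR ?H0.
Qed.

Lemma historic_join_at_root B : B 0 = true ->
  historic_with (B \o succn) gL -> historic_with (B \o succn) gR ->
  historic_with B f.
Proof.
move=> B0 /historic_withP[pL rL bL uL] /historic_withP[pR rR bR uR].
have [hL hR h0] := height_join_at_root pL pR.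
apply/historic_withP; split; first exact: parent_lt_join_at_root.
- by move=> x; case: (split_vertexP S x) => [|r|r];
    rewrite ?join_at_root0 ?join_at_rootL ?join_at_rootR.
- move=> x y; case: (split_vertexP S x) => [|r|r];
    rewrite ?join_at_root0 ?join_at_rootL ?join_at_rootR //=.
  + by case E: (gL r) => [[j c]|] [<- ec] //; subst c; rewrite hL; exact: bL E.
  + case E: (gR r) => [[j c]|] [<-]; last by rewrite h0.
    by move=> ec; subst c; rewrite hR; exact: bR E.
- move=> x x'; case: (split_vertexP S x) => [|r|r];
    rewrite ?join_at_root0 ?join_at_rootL ?join_at_rootR // => _;
  case: (split_vertexP S x') => [|r'|r'];
    rewrite ?join_at_root0 ?join_at_rootL ?join_at_rootR // => /graft_parent_eq.
  + case E: (gL r) => [[j c]|]; case E': (gL r') => [[j' c']|] //.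
    * by case=> /elt_inj ej ec; subst; congr (lift ord0 (elt S _)); apply: uL; rewrite ?E ?E'.
    * by move=> _; congr (lift ord0 (elt S _)); apply: ord_inj; rewrite (rL _ E) (rL _ E').
  + case: (gL r) => [[j c]|]; case: (gR r') => [[j' c']|] //.
    by case=> e _; have := elt_in j; rewrite e elt_notinC.
  + case: (gR r) => [[j c]|]; case: (gL r') => [[j' c']|] //.
    by case=> e _; have := elt_in j'; rewrite -e elt_notinC.
  + case E: (gR r) => [[j c]|]; case E': (gR r') => [[j' c']|] //.
    * by case=> /elt_inj ej ec; subst; congr (lift ord0 (elt (~: S) _)); apply: uR; rewrite ?E ?E'.
    * by move=> _; congr (lift ord0 (elt (~: S) _)); apply: ord_inj; rewrite (rR _ E) (rR _ E').
Qed.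

End JoinAtRoot.

(* The slot of the root below which a vertex lies ([false] for the root). *)
Definition root_side N (f : tree_code N) :=
  parent_fold false (fun j b s => if val j == 0 then b else s) f.

Definition left_part N (f : tree_code N.+1) : {set 'I_N} :=
  [set i | ~~ root_side f (lift ord0 i)].

Lemma left_part_join_at_root N (S : {set 'I_N}) (gL : tree_code #|S|) (gR : tree_code #|~: S|) :
  parent_lt gL -> parent_lt gR -> left_part (join_at_root gL gR) = S.
Proof.
move=> pL pR; have ps := parent_lt_join_at_root pL pR.
pose G x := if unlift ord0 x is Some i then i \notin S else false.
have hG : parent_recursive false (fun j b s => if val j == 0 then b else s)
                            (join_at_root gL gR) G.
  move=> x; case: (split_vertexP S x) => [|r|r];
    rewrite /G ?unlift_none ?liftK ?join_at_root0 ?join_at_rootL ?join_at_rootR //=.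
  - by rewrite elt_in /=; case: (gL r) => [[j c]|] //=; rewrite liftK elt_in.
  - by rewrite elt_notinC; case: (gR r) => [[j c]|] //=; rewrite liftK elt_notinC.
have e := parent_recursive_uniq ps (parent_foldE _ _ ps) hG.
by apply/setP=> i; rewrite inE /root_side e /G liftK negbK.
Qed.

Section HistoricSubtree.
Variables (B : nat -> bool) (N : nat) (f : tree_code N.+1).
Hypothesis hf : historic_with B f.
Implicit Types (T : {set 'I_N}) (s : bool).

Definition grafted (T : {set 'I_N}) s :=
  forall r, f (lift ord0 (elt T r)) = graft_parent (elt T) s (subtree T f r).

Lemma grafted_side T s :
  (forall i, (i \in T) = (root_side f (lift ord0 i) == s)) -> grafted T s.
Proof.
move: hf => /historic_withP[ps r0 _ _] hT r; rewrite ffunE.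
have := hT (elt T r); rewrite elt_in /root_side (parent_foldE _ _ ps) => /esym/eqP.
case E: (f (lift ord0 (elt T r))) => [[j b]|]; last by have := r0 _ E.
rewrite /=; case: (unliftP ord0 j) => [j' ->|->] /= hs; last by rewrite hs.
have /elt_surj[r' <-] : j' \in T by rewrite hT /root_side hs.
by rewrite elt_indexK.
Qed.

Lemma parent_lt_subtree T s : grafted T s -> parent_lt (subtree T f).
Proof.
have /historic_withP[ps _ _ _] := hf.
by move=> hg r j b E; have := hg r; rewrite E => /ps; rewrite /= /bump /= add1n ltnS elt_lt.
Qed.

Lemma historic_subtree T s : grafted T s ->
  (forall r, height f (lift ord0 (elt T r)) = (height (subtree T f) r).+1) ->
  historic_with (B \o succn) (subtree T f).
Proof.
move=> hg hh; have pg := parent_lt_subtree hg; set g := subtree T f in hg hh pg *.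
have /historic_withP[ps r0 p u] := hf.
apply/historic_withP; split => //.
- move=> r E; pose z := Ordinal (leq_ltn_trans (leq0n r) (ltn_ord r)).
  have gz : g z = None by case Ez: (g z) => [[j b]|] //; have := pg _ _ _ Ez.
  have := u (lift ord0 (elt T r)) (lift ord0 (elt T z)); rewrite !hg E gz.
  by move=> /(_ isT erefl) /lift_inj /elt_inj ->.
- move=> r j E; have := p (lift ord0 (elt T r)) (lift ord0 (elt T j)).
  by rewrite hg E hh => /(_ erefl).
- move=> r r' h E; have := u (lift ord0 (elt T r)) (lift ord0 (elt T r')).
  by rewrite !hg E => /(_ isT erefl) /lift_inj /elt_inj.
Qed.

Variable S : {set 'I_N}.
Hypothesis eS : left_part f = S.

Lemma grafted_left : grafted S false.
Proof. by apply: grafted_side => i; rewrite -eS inE eqbF_neg. Qed.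

Lemma grafted_right : grafted (~: S) true.
Proof. by apply: grafted_side => i; rewrite inE -eS inE negbK eqb_id. Qed.

Lemma join_at_root_subtrees : f = join_at_root (subtree S f) (subtree (~: S) f).
Proof.
have /historic_withP[ps _ _ _] := hf.
apply/ffunP=> x; case: (split_vertexP S x) => [|r|r].
- by rewrite join_at_root0; case E: (f ord0) => [[j b]|] //; have := ps _ _ _ E.
- by rewrite join_at_rootL grafted_left.
- by rewrite join_at_rootR grafted_right.
Qed.

Lemma historic_subtrees :
  historic_with (B \o succn) (subtree S f) && historic_with (B \o succn) (subtree (~: S) f).
Proof.
have [hL hR _] := height_join_at_root (parent_lt_subtree grafted_left)
                                      (parent_lt_subtree grafted_right).
rewrite (historic_subtree grafted_left) ?(historic_subtree grafted_right) // => j.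
- by rewrite {1}join_at_root_subtrees hR.
- by rewrite {1}join_at_root_subtrees hL.
Qed.

End HistoricSubtree.

Lemma count_historic_left_part B N (S : {set 'I_N}) : B 0 = true ->
  #|[pred f : tree_code N.+1 | historic_with B f && (left_part f == S)]| =
  count_historic (B \o succn) #|S| * count_historic (B \o succn) #|~: S|.
Proof.
move=> B0.
pose X := [set g : tree_code #|S| | historic_with (B \o succn) g].
pose Y := [set g : tree_code #|~: S| | historic_with (B \o succn) g].
have -> : count_historic (B \o succn) #|S| = #|X| by apply: eq_card => g; rewrite !inE.
have -> : count_historic (B \o succn) #|~: S| = #|Y| by apply: eq_card => g; rewrite !inE.
rewrite -cardsX.
pose F (p : tree_code #|S| * tree_code #|~: S|) := join_at_root p.1 p.2.
have Finj : injective F.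
  move=> [a b] [c d]; rewrite /F /= => e; have := congr1 (subtree S) e; have := congr1 (subtree (~: S)) e.
  by rewrite !subtree_join_at_rootL !subtree_join_at_rootR => -> ->.
rewrite -(card_imset (setX X Y) Finj); apply: eq_card => f; rewrite inE.
apply/andP/imsetP.
- case=> hf /eqP eS; exists (subtree S f, subtree (~: S) f).
    by rewrite !inE /=; apply: (historic_subtrees hf eS).
  exact: (join_at_root_subtrees hf eS).
- case=> [[a b]]; rewrite !inE /= => /andP[ha hb] ->.
  split; first exact: historic_join_at_root.
  by apply/eqP; apply: left_part_join_at_root;
    [case/historic_withP: ha | case/historic_withP: hb].
Qed.

Lemma card_fibers (T U : finType) (P : pred T) (L : T -> U) :
  #|P| = \sum_(u : U) #|[pred x | P x && (L x == u)]|.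
Proof.
rewrite -sum1_card (partition_big L predT) //=; apply: eq_bigr => u _.
by rewrite -sum1_card; apply: eq_bigl => x; rewrite !inE.
Qed.

Lemma sum_set_card N (F : nat -> nat) :
  \sum_(S : {set 'I_N}) F #|S| = \sum_(k < N.+1) 'C(N, k) * F k.
Proof.
rewrite (partition_big (fun S : {set 'I_N} => (inord #|S| : 'I_N.+1)) predT) //=.
apply: eq_bigr => k _.
have leN (S : {set 'I_N}) : (#|S| < N.+1)%N.
  by rewrite ltnS -[X in _ <= X](card_ord N) max_card.
transitivity (\sum_(S : {set 'I_N} | #|S| == k) F k).
  apply: eq_big => S; first by rewrite -(inj_eq val_inj) /= inordK.
  by move=> /eqP <-; rewrite inordK.
rewrite sum_nat_const; congr (_ * _).
by have := @card_draws 'I_N k; rewrite card_ord => <-; apply: eq_card => S; rewrite !inE.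
Qed.

Lemma count_historic_branching B N : B 0 = true ->
  count_historic B N.+1 = \sum_(k < N.+1)
    'C(N, k) * (count_historic (B \o succn) k * count_historic (B \o succn) (N - k)).
Proof.
move=> B0; rewrite {1}/count_historic (card_fibers _ (@left_part N)).
rewrite -(sum_set_card N (fun k =>
  count_historic (B \o succn) k * count_historic (B \o succn) (N - k))).
apply: eq_bigr => S _.
have eC : #|~: S| = N - #|S| by have := cardsC S; rewrite card_ord; lia.
by rewrite count_historic_left_part // eC.
Qed.

(** * Periodic branching heights *)

Definition branching_from (m d h : nat) : bool := (d <= h) && ((h - d) %% m.+1 == 0).

Lemma count_branching_from_succ m d N : (0 < d)%N ->
  count_historic (branching_from m d) N.+1 = count_historic (branching_from m d.-1) N.
Proof.
move=> d_gt0; rewrite count_historic_add_root; last by rewrite /branching_from; case: d d_gt0.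
apply: eq_count_historic => h /=; rewrite /branching_from.
have -> : (d <= h.+1) = (d.-1 <= h) by apply/idP/idP; lia.
by have -> : h.+1 - d = h - d.-1 by lia.
Qed.

Lemma count_branching_from_add m j d N : (j <= d)%N ->
  count_historic (branching_from m d) (N + j) = count_historic (branching_from m (d - j)) N.
Proof.
elim: j d => [|j IH] d jd; first by rewrite addn0 subn0.
rewrite addnS count_branching_from_succ; last by lia.
by rewrite IH; [congr count_historic; congr branching_from; lia | lia].
Qed.

Lemma count_branching_from0 m N : count_historic (branching_from m 0) N.+1 =
  \sum_(k < N.+1) 'C(N, k) *
    (count_historic (branching_from m m) k * count_historic (branching_from m m) (N - k)).
Proof.
have shift : branching_from m 0 \o succn =1 branching_from m m.
  move=> h; rewrite /= /branching_from subn0 /=.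
  case: (leqP m h) => hm /=; last by rewrite modn_small.
  have -> : h.+1 = (h - m) + m.+1 by lia.
  by rewrite modnDr.
rewrite count_historic_branching; last by rewrite /branching_from mod0n.
by apply: eq_bigr => k _; rewrite !(eq_count_historic _ shift).
Qed.

Lemma historic_countE m N : historic_count m N = count_historic (branching_from m (2 * m)) N.
Proof. by []. Qed.

Lemma historic_count_rec m n :
  historic_count m (n + m.+1 + m) =
  \sum_(k < n.+1) 'C(n, k) * (historic_count m (k + m) * historic_count m (n - k + m)).
Proof.
have -> : n + m.+1 + m = n.+1 + 2 * m by lia.
rewrite historic_countE count_branching_from_add // subnn count_branching_from0.
apply: eq_bigr => k _; rewrite !historic_countE !count_branching_from_add ?leq_pmull //.
by have -> : 2 * m - m = m by lia.
Qed.

Lemma historic_count_small m k : (k <= m)%N -> historic_count m (k + m) = 1.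
Proof.
move=> km; rewrite historic_countE count_branching_from_add; last by lia.
by rewrite -[k]add0n count_branching_from_add ?count_historic0 //; lia.
Qed.

Local Open Scope ring_scope.

Lemma iter_fps_derivE (F : fps) k n :
  iter k fps_deriv F n * (n`!)%:R = F (n + k)%N * ((n + k)`!)%:R.
Proof.
elim: k F n => [|k IH] F n; first by rewrite addn0.
by rewrite iterSr IH /fps_deriv addnS factS natrM -mulr_natr; ring.
Qed.

Theorem mainTheorem8 (m : nat) (hm : (1 <= m)%N) :
  let H := egf (fun n => historic_count m (n + m)) in
  iter m.+1 fps_deriv H =1 fps_mul H H /\
  (forall k : nat, (k <= m)%N -> iter k fps_deriv H 0%N = 1).
Proof.
move=> H.
have fact_neq0 n : (n`!)%:R != 0 :> rat by rewrite pnatr_eq0 -lt0n fact_gt0.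
split.
- move=> n; apply: (mulIf (fact_neq0 n)).
  rewrite iter_fps_derivE /H /egf divfK // historic_count_rec.
  rewrite /fps_mul mulr_suml natr_sum; apply: eq_bigr => k _.
  have kn : (k <= n)%N by rewrite -ltnS.
  rewrite -(bin_fact kn) !natrM.
  have := fact_neq0 k; have := fact_neq0 (n - k)%N.
  move: (k`!)%:R ((n - k)`!)%:R => a b ha hb.
  by field; rewrite ha hb.
- move=> k km; have := iter_fps_derivE H k 0; rewrite fact0 mulr1 add0n => ->.
  by rewrite /H /egf divfK // historic_count_small.
Qed.
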